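(* Let $F$ be a subfield of $\mathbb{R}$ and let $\sigma$ be an $F$-simplex. Then for every dihedral angle $\theta$ of $\sigma$ (the angle between two faces of $\sigma$ of the form $\mathrm{conv}(S\cup\{s\})$ and $\mathrm{conv}(S\cup\{t\})$ for a set $S$ of vertices and distinct vertices $s,t\notin S$), the square of each trigonometric function of $\theta$ (where defined) lies in $F$; in particular $\cos^2\theta\in F$.
   Context: A Euclidean simplex is an $F$-simplex if the square of the length of each of its edges ($1$-cells) lies in $F$. *)

From HB Require Import structures.
From mathcomp Require Import all_boot all_order all_algebra.
From mathcomp Require Import all_classical all_reals all_analysis.
Set Implicit Arguments. Unset Strict Implicit. Unset Printing Implicit Defensive.
Import Order.TTheory GRing.Theory Num.Theory.
Local Open Scope ring_scope.

Definition dotp (R : realType) (n : nat) (u w : 'rV[R]_n) : R := (u *m w^T) 0 0.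
Definition vnorm (R : realType) (n : nat) (u : 'rV[R]_n) : R := Num.sqrt (dotp u u).

Definition affinely_independent (R : realType) (n k : nat)
  (v : 'I_k.+1 -> 'rV[R]_n) : Prop :=
  row_free (\matrix_(i < k) (v (lift ord0 i) - v ord0)).

Definition F_simplex (R : realType) (F : {pred R}) (n k : nat)
  (v : 'I_k.+1 -> 'rV[R]_n) : Prop :=
  affinely_independent v /\
  forall i j : 'I_k.+1, dotp (v i - v j) (v i - v j) \in F.

Definition in_aff_hull (R : realType) (n k : nat) (v : 'I_k.+1 -> 'rV[R]_n)
  (S : {set 'I_k.+1}) (p : 'rV[R]_n) : Prop :=
  exists lam : 'I_k.+1 -> R,
    \sum_(i in S) lam i = 1 /\ p = \sum_(i in S) lam i *: v i.

Definition is_foot (R : realType) (n k : nat) (v : 'I_k.+1 -> 'rV[R]_n)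
  (S : {set 'I_k.+1}) (x p : 'rV[R]_n) : Prop :=
  in_aff_hull v S p /\
  forall i j, i \in S -> j \in S -> dotp (x - p) (v i - v j) = 0.

(* theta is the dihedral angle of the simplex v between the faces
   conv(S u {s}) and conv(S u {t}) (along the common face conv(S)):
   the angle in [0, pi] between the components of v s and v t orthogonal
   to the affine hull of S. *)
Definition dihedral_angle (R : realType) (n k : nat) (v : 'I_k.+1 -> 'rV[R]_n)
  (S : {set 'I_k.+1}) (s t : 'I_k.+1) (theta : R) : Prop :=
  (0 < #|S|)%N /\ s != t /\ s \notin S /\ t \notin S /\
  exists p q : 'rV[R]_n,
    is_foot v S (v s) p /\ is_foot v S (v t) q /\
    0 <= theta <= pi /\
    cos theta = dotp (v s - p) (v t - q) / (vnorm (v s - p) * vnorm (v t - q)).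

From HB Require Import structures.
From mathcomp Require Import all_boot all_order all_algebra.
From mathcomp Require Import all_classical all_reals all_analysis.
From mathcomp Require Import ring lra.
Import Order.TTheory GRing.Theory Num.Theory.
Local Open Scope ring_scope.

(* Fix a vertex s0 of S.  By polarization, the vectors v i - v s0 have an
   F-valued Gram matrix.  Gram-Schmidt run inside F shows that the foot p of
   any vertex on aff(v S) has v a - p in the F-span of these vectors, so the
   inner products of the two altitude vectors v s - p and v t - q lie in F,
   and so does cos^2 theta = <a, b>^2 / (<a, a> <b, b>).  The other squared
   trigonometric functions are rational in cos^2 theta. *)

Section Dotp.
Context {R : realType} {n : nat}.
Implicit Types (u w z : 'rV[R]_n) (c : R).

Lemma dotpE u w : dotp u w = \sum_j u 0 j * w 0 j.
Proof. by rewrite /dotp mxE; apply: eq_bigr => j _; rewrite mxE. Qed.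

Lemma dotpC u w : dotp u w = dotp w u.
Proof. by rewrite /dotp -{1}(trmxK (u *m w^T)) trmx_mul trmxK [in LHS]mxE. Qed.

Lemma dotpDl u w z : dotp (u + w) z = dotp u z + dotp w z.
Proof. by rewrite /dotp mulmxDl mxE. Qed.

Lemma dotpBl u w z : dotp (u - w) z = dotp u z - dotp w z.
Proof. by rewrite /dotp mulmxBl !mxE. Qed.

Lemma dotpZl c u z : dotp (c *: u) z = c * dotp u z.
Proof. by rewrite /dotp -scalemxAl mxE. Qed.

Lemma dotp0l z : dotp 0 z = 0.
Proof. by rewrite /dotp mul0mx mxE. Qed.

Lemma dotp_suml (I : Type) (r : seq I) (P : pred I) (f : I -> 'rV[R]_n) z :
  dotp (\sum_(i <- r | P i) f i) z = \sum_(i <- r | P i) dotp (f i) z.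
Proof.
by apply: (big_ind2 (fun a b => dotp a z = b)) => [|a b c d <- <-|]; rewrite ?dotp0l ?dotpDl.
Qed.

Lemma dotpDr u w z : dotp z (u + w) = dotp z u + dotp z w.
Proof. by rewrite dotpC dotpDl !(dotpC z). Qed.

Lemma dotpBr u w z : dotp z (u - w) = dotp z u - dotp z w.
Proof. by rewrite dotpC dotpBl !(dotpC z). Qed.

Lemma dotpZr c u z : dotp z (c *: u) = c * dotp z u.
Proof. by rewrite dotpC dotpZl dotpC. Qed.

Lemma dotp_ge0 u : 0 <= dotp u u.
Proof. by rewrite dotpE sumr_ge0 // => j _; rewrite -expr2 sqr_ge0. Qed.

Lemma dotp_eq0 u : (dotp u u == 0) = (u == 0).
Proof.
apply/idP/eqP => [|->]; last by rewrite dotp0l.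
rewrite dotpE psumr_eq0 => [/allP u0|j _]; last by rewrite -expr2 sqr_ge0.
apply/rowP => j; have /implyP := u0 j (mem_index_enum j).
by rewrite mxE mulf_eq0 orbb => /(_ isT)/eqP.
Qed.

End Dotp.

Section KSpan.
Context {R : realType} {n : nat} (K : divringClosed R).
Implicit Types (ws : seq 'rV[R]_n) (u w x y z : 'rV[R]_n).

Fixpoint kspan ws y : Prop :=
  if ws is w :: ws' then exists2 c, c \in K & exists2 y', kspan ws' y' & y = c *: w + y'
  else y = 0.

Definition gram_in ws := {in ws &, forall w1 w2, dotp w1 w2 \in K}.

Lemma kspan0 ws : kspan ws 0.
Proof.
elim: ws => [|w ws IH] //=; exists 0; rewrite ?rpred0 //.
by exists 0; rewrite ?scale0r ?addr0.
Qed.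

Lemma kspanD ws y z : kspan ws y -> kspan ws z -> kspan ws (y + z).
Proof.
elim: ws y z => [|w ws IH] y z /=; first by move=> -> ->; rewrite addr0.
move=> [c Kc [y' ws_y' ->]] [d Kd [z' ws_z' ->]].
exists (c + d); first exact: rpredD.
by exists (y' + z'); [exact: IH | rewrite scalerDl addrACA].
Qed.

Lemma kspanZ ws c y : c \in K -> kspan ws y -> kspan ws (c *: y).
Proof.
move=> Kc; elim: ws y => [|w ws IH] y /=; first by move->; rewrite scaler0.
move=> [d Kd [y' ws_y' ->]]; exists (c * d); first exact: rpredM.
by exists (c *: y'); [exact: IH | rewrite scalerDr scalerA].
Qed.

Lemma kspanB ws y z : kspan ws y -> kspan ws z -> kspan ws (y - z).
Proof. by move=> ws_y ws_z; apply: kspanD; rewrite // -scaleN1r; apply: kspanZ; rewrite ?rpredN1. Qed.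

Lemma kspan_mem ws w : w \in ws -> kspan ws w.
Proof.
elim: ws => [|u ws IH] //=; rewrite in_cons => /predU1P [->|ws_w].
  by exists 1; rewrite ?rpred1 //; exists 0; rewrite ?scale1r ?addr0 //; exact: kspan0.
by exists 0; rewrite ?rpred0 //; exists w; rewrite ?scale0r ?add0r //; exact: IH.
Qed.

Lemma kspan_subset ws ws' y : {subset ws <= ws'} -> kspan ws y -> kspan ws' y.
Proof.
elim: ws y => [|w ws IH] y sub /=; first by move->; exact: kspan0.
move=> [c Kc [y' ws_y' ->]]; apply: kspanD.
  by apply/kspanZ/kspan_mem/sub/mem_head.
by apply: IH => // u ws_u; apply/sub; rewrite in_cons ws_u orbT.
Qed.

Lemma dotp_kspan_eq0 {ws z y} :
  {in ws, forall w, dotp z w = 0} -> kspan ws y -> dotp z y = 0.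
Proof.
elim: ws y => [|w ws IH] y z_ws /=; first by move->; rewrite dotpC dotp0l.
move=> [c _ [y' ws_y' ->]]; rewrite dotpDr dotpZr z_ws ?mem_head // mulr0 add0r.
by apply: IH => // u ws_u; apply: z_ws; rewrite in_cons ws_u orbT.
Qed.

Lemma dotp_kspan_in {ws z y} :
  {in ws, forall w, dotp z w \in K} -> kspan ws y -> dotp z y \in K.
Proof.
elim: ws y => [|w ws IH] y z_ws /=; first by move->; rewrite dotpC dotp0l rpred0.
move=> [c Kc [y' ws_y' ->]]; rewrite dotpDr dotpZr rpredD ?rpredM ?(z_ws w) ?mem_head //.
by apply: IH => // u ws_u; apply: z_ws; rewrite in_cons ws_u orbT.
Qed.

Lemma gram_kspan {ws y z} : gram_in ws -> kspan ws y -> kspan ws z -> dotp y z \in K.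
Proof.
move=> Kws ws_y ws_z; apply: dotp_kspan_in ws_z => w ws_w.
by rewrite dotpC; apply: dotp_kspan_in ws_y => u ws_u; apply: Kws.
Qed.

(* One Gram-Schmidt step: [w - m] is the component of [w] orthogonal to [ws], and
   the projection [yx] of [x] on [ws] is corrected along it. *)
Lemma orthoproj_cons {x w ws m yx} :
  kspan ws m -> {in ws, forall u, dotp (w - m) u = 0} ->
  kspan ws yx -> {in ws, forall u, dotp (x - yx) u = 0} ->
  dotp x (w - m) \in K -> dotp (w - m) (w - m) \in K ->
  exists2 y, kspan (w :: ws) y & {in w :: ws, forall u, dotp (x - y) u = 0}.
Proof.
set w' := w - m => ws_m w'_ws ws_yx x_ws Kxw' Kw'.
set c := dotp x w' / dotp w' w'.
have ws_sub : {subset ws <= w :: ws} by move=> u ws_u; rewrite in_cons ws_u orbT.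
exists (yx + c *: w'); last rewrite opprD addrA.
  apply: kspanD; first exact: kspan_subset ws_yx.
  apply/kspanZ; first exact: rpred_div.
  by apply: kspanB; [exact/kspan_mem/mem_head | exact: kspan_subset ws_m].
have orth_ws : {in ws, forall u, dotp (x - yx - c *: w') u = 0}.
  by move=> u ws_u; rewrite dotpBl dotpZl x_ws // w'_ws // mulr0 subr0.
move=> u; rewrite in_cons => /predU1P [->|]; last exact: orth_ws.
have yx_w' : dotp yx w' = 0 by rewrite dotpC; exact: dotp_kspan_eq0 ws_yx.
rewrite -(subrK m w) -/w' dotpDr (dotp_kspan_eq0 orth_ws ws_m) addr0.
rewrite dotpBl dotpZl dotpBl yx_w' subr0.
have [w'0|w'_neq0] := eqVneq w' 0; first by rewrite w'0 dotp0l (dotpC x) dotp0l mulr0 subr0.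
by rewrite /c mulfVK ?subrr // dotp_eq0.
Qed.

Lemma kspan_orthoproj {ws x} : gram_in ws -> {in ws, forall w, dotp x w \in K} ->
  exists2 y, kspan ws y & {in ws, forall w, dotp (x - y) w = 0}.
Proof.
elim: ws x => [|w ws IH] x Kws Kx; first by exists 0.
have Kws' : gram_in ws by move=> u1 u2 h1 h2; apply: Kws; rewrite in_cons ?h1 ?h2 orbT.
have [m ws_m w'_ws] : exists2 m, kspan ws m & {in ws, forall u, dotp (w - m) u = 0}.
  by apply: IH => // u ws_u; apply: Kws; rewrite ?mem_head // in_cons ws_u orbT.
have [yx ws_yx x_ws] : exists2 y, kspan ws y & {in ws, forall u, dotp (x - y) u = 0}.
  by apply: IH => // u ws_u; apply: Kx; rewrite in_cons ws_u orbT.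
apply: (orthoproj_cons ws_m w'_ws ws_yx x_ws).
  rewrite dotpBr rpredB ?(Kx w) ?mem_head //.
  by apply: (dotp_kspan_in _ ws_m) => u ws_u; apply: Kx; rewrite in_cons ws_u orbT.
rewrite dotpBl [dotp m _]dotpC (dotp_kspan_eq0 w'_ws ws_m) subr0 dotpBr.
rewrite rpredB ?(Kws w w) ?mem_head //.
by apply: (dotp_kspan_in _ ws_m) => u ws_u; apply: Kws; rewrite ?mem_head // in_cons ws_u orbT.
Qed.

End KSpan.

Section Simplex.
Context {R : realType} {K : divringClosed R} {n k : nat} {v : 'I_k.+1 -> 'rV[R]_n}.
Implicit Types (x p y : 'rV[R]_n) (S : {set 'I_k.+1}).
Hypothesis edgeK : forall i j, dotp (v i - v j) (v i - v j) \in K.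

Lemma dotp_edges_in a b c d : dotp (v a - v b) (v c - v d) \in K.
Proof.
have polar : dotp (v a - v b) (v c - v d) * 2 =
    dotp (v a - v d) (v a - v d) + dotp (v b - v c) (v b - v c)
    - dotp (v a - v c) (v a - v c) - dotp (v b - v d) (v b - v d).
  rewrite !dotpE mulr_suml -big_split -!sumrB; apply: eq_bigr => j _ /=; rewrite !mxE; ring.
have two_neq0 : (2 : R) != 0 by rewrite pnatr_eq0.
by rewrite -(mulfK two_neq0 (dotp _ _)) polar rpred_div ?rpred_nat ?rpredB ?rpredD.
Qed.

Lemma gram_vertex_diffs s0 : gram_in K [seq v i - v s0 | i : 'I_k.+1].
Proof. by move=> _ _ /mapP [i _ ->] /mapP [j _ ->]; exact: dotp_edges_in. Qed.

Lemma is_foot_eq {S} {s0 : 'I_k.+1} {x p y} : s0 \in S -> is_foot v S x p ->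
  kspan K [seq v i - v s0 | i in S] y ->
  {in [seq v i - v s0 | i in S], forall w, dotp (x - v s0 - y) w = 0} ->
  p = v s0 + y.
Proof.
move=> S_s0 [[lam [sum_lam p_lam]] xp_S] S_y xy_S.
have dir_S i : i \in S -> v i - v s0 \in [seq v i - v s0 | i in S].
  by move=> S_i; apply/mapP; exists i; rewrite ?mem_enum.
set d := p - (v s0 + y).
have d_S : {in [seq v i - v s0 | i in S], forall w, dotp d w = 0}.
  move=> w /mapP [i]; rewrite mem_enum => S_i ->.
  have /xy_S := dir_S i S_i.
  have := xp_S i s0 S_i S_s0; rewrite /d !dotpBl dotpDl; lra.
have p_S : p - v s0 = \sum_(i in S) lam i *: (v i - v s0).
  under eq_bigr do rewrite scalerBr.
  by rewrite sumrB -scaler_suml sum_lam scale1r p_lam.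
have : dotp d d = 0.
  rewrite {1}/d opprD addrA p_S dotpBl dotp_suml (dotpC y) (dotp_kspan_eq0 _ d_S S_y) subr0.
  by rewrite big1 // => i S_i; rewrite dotpZl dotpC d_S ?mulr0 ?dir_S.
by move/eqP; rewrite dotp_eq0 subr_eq0 => /eqP.
Qed.

Lemma kspan_foot_diff {S s0 a p} : s0 \in S -> is_foot v S (v a) p ->
  kspan K [seq v i - v s0 | i : 'I_k.+1] (v a - p).
Proof.
move=> S_s0 foot_p.
have sub : {subset [seq v i - v s0 | i in S] <= [seq v i - v s0 | i : 'I_k.+1]}.
  by move=> _ /mapP [i _ ->]; apply/mapP; exists i; rewrite ?mem_enum.
have gram_S : gram_in K [seq v i - v s0 | i in S].
  move=> w1 w2 /sub w1_diffs /sub w2_diffs.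
  exact: (gram_vertex_diffs s0 w1 w2 w1_diffs w2_diffs).
have [y S_y xy_S] : exists2 y, kspan K [seq v i - v s0 | i in S] y &
    {in [seq v i - v s0 | i in S], forall w, dotp (v a - v s0 - y) w = 0}.
  by apply: kspan_orthoproj gram_S _ => _ /mapP [i _ ->]; exact: dotp_edges_in.
rewrite (is_foot_eq S_s0 foot_p S_y xy_S) opprD addrA.
apply: kspanB; last exact: kspan_subset sub S_y.
by apply: kspan_mem; apply/mapP; exists a; rewrite ?mem_enum.
Qed.

End Simplex.

Lemma trig_sqr_in {R : realType} {K : divringClosed R} {theta : R} :
  cos theta ^+ 2 \in K ->
  [/\ cos theta ^+ 2 \in K,
      sin theta ^+ 2 \in K,
      cos theta != 0 -> tan theta ^+ 2 \in K /\ (cos theta ^+ 2)^-1 \in K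
    & sin theta != 0 -> (cos theta / sin theta) ^+ 2 \in K /\ (sin theta ^+ 2)^-1 \in K].
Proof.
move=> cos2K; have sin2K : sin theta ^+ 2 \in K by rewrite sin2cos2 rpredB ?rpred1.
by split=> // _; rewrite /tan expr_div_n rpred_div ?rpredV.
Qed.

Theorem lemma6p4 (R : realType) (F : {pred R}) (hF : divring_closed F)
  (n k : nat) (v : 'I_k.+1 -> 'rV[R]_n) (hv : F_simplex F v)
  (S : {set 'I_k.+1}) (s t : 'I_k.+1) (theta : R)
  (htheta : dihedral_angle v S s t theta) :
  [/\ cos theta ^+ 2 \in F,
      sin theta ^+ 2 \in F,
      cos theta != 0 -> tan theta ^+ 2 \in F /\ (cos theta ^+ 2)^-1 \in F
    & sin theta != 0 -> (cos theta / sin theta) ^+ 2 \in F /\ (sin theta ^+ 2)^-1 \in F].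
Proof.
pose K : divringClosed R := HB.pack F (GRing.isDivringClosed.Build R F hF).
have edgeK : forall i j, dotp (v i - v j) (v i - v j) \in K := hv.2.
case: htheta => /card_gt0P [s0 S_s0] [_ [_ [_ [p [q [foot_p [foot_q [_ cos_theta]]]]]]]].
have gram := gram_vertex_diffs edgeK s0.
have s_p := kspan_foot_diff edgeK S_s0 foot_p.
have t_q := kspan_foot_diff edgeK S_s0 foot_q.
have cos2K : cos theta ^+ 2 \in K.
  rewrite cos_theta /vnorm expr_div_n exprMn !sqr_sqrtr ?dotp_ge0 //.
  by rewrite rpred_div ?rpredX ?rpredM ?(gram_kspan _ gram).
exact (trig_sqr_in cos2K).
Qed.
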